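(* Let $X\in\mathsf{CB_0}(\mathbf{\Delta}^1_1)$. Then $\mathbf{\Delta}^1_1(X)=\bigcup\{\mathbf{\Sigma}^0_\alpha(X)\mid\alpha<\omega_1\}$.
   Context: $\mathcal{N}=\omega^\omega$ is the Baire space. For a topological space $X$: $\mathbf{\Sigma}^0_0(X)=\{\emptyset\}$; $\mathbf{\Sigma}^0_1(X)$ is the set of open sets; $\mathbf{\Sigma}^0_2(X)$ is the set of countable unions of sets $U\setminus V$ with $U,V$ open; for $2<\alpha<\omega_1$, $\mathbf{\Sigma}^0_\alpha(X)$ is the set of countable unions of complements of sets in $\bigcup_{\beta<\alpha}\mathbf{\Sigma}^0_\beta(X)$. $\mathbf{\Sigma}^1_1(X)$ is the set of projections $\{x\in X\mid\exists p\in\mathcal{N}\,(p,x)\in A\}$ of sets $A\subseteq\mathcal{N}\times X$ whose complement lies in $\mathbf{\Sigma}^0_2(\mathcal{N}\times X)$; $\mathbf{\Pi}^1_1(X)$ consists of complements of $\mathbf{\Sigma}^1_1(X)$-sets, and $\mathbf{\Delta}^1_1(X)=\mathbf{\Sigma}^1_1(X)\cap\mathbf{\Pi}^1_1(X)$. $P\omega$ is the set of all subsets of $\omega$ with the Scott topology (basic open sets $\{A\subseteq\omega\mid F\subseteq A\}$, $F$ finite). $\mathsf{CB_0}(\mathbf{\Delta}^1_1)$ is the class of spaces homeomorphic to a subspace $S\subseteq P\omega$ with $S\in\mathbf{\Delta}^1_1(P\omega)$. *)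

From HB Require Import structures.
From mathcomp Require Import all_boot all_order all_algebra.
From mathcomp Require Import all_classical all_reals.
From mathcomp Require Import topology_structure product_topology nat_topology
  subtype_topology function_spaces.

Set Implicit Arguments.
Unset Strict Implicit.
Unset Printing Implicit Defensive.

Local Open Scope classical_set_scope.

(* Countable ordinals, represented by Brouwer trees.  Every Brouwer   *)
(* tree denotes a countable ordinal and every countable ordinal       *)
(* (alpha < omega_1) is denoted by some Brouwer tree.                 *)
Inductive ord : Type :=
| OZ : ord
| OS : ord -> ord
| OL : (nat -> ord) -> ord.

Inductive ord_le : ord -> ord -> Prop :=
| ord_le_Z b : ord_le OZ b
| ord_le_S a b : ord_le a b -> ord_le (OS a) (OS b)
| ord_le_limR a (f : nat -> ord) n : ord_le a (f n) -> ord_le a (OL f)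
| ord_le_limL (f : nat -> ord) b : (forall n, ord_le (f n) b) -> ord_le (OL f) b.

Definition ord_lt (a b : ord) : Prop := ord_le (OS a) b.
Definition ord_eq (a b : ord) : Prop := ord_le a b /\ ord_le b a.

Definition ord1 : ord := OS OZ.
Definition ord2 : ord := OS (OS OZ).

Definition Sigma02 {X : topologicalType} (A : set X) : Prop :=
  exists U V : nat -> set X,
    (forall n, open (U n) /\ open (V n)) /\
    A = \bigcup_(n in [set: nat]) (U n `\` V n).

Inductive Sigma0 {X : topologicalType} : ord -> set X -> Prop :=
| Sigma0_zero a : ord_eq a OZ -> Sigma0 a set0
| Sigma0_one a A : ord_eq a ord1 -> open A -> Sigma0 a A
| Sigma0_two a A : ord_eq a ord2 -> Sigma02 A -> Sigma0 a A
| Sigma0_big a (b : nat -> ord) (C : nat -> set X) :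
    ord_lt ord2 a ->
    (forall n, ord_lt (b n) a) ->
    (forall n, Sigma0 (b n) (C n)) ->
    Sigma0 a (\bigcup_(n in [set: nat]) ~` C n).

Definition Baire : Type := prod_topology (fun _ : nat => nat).

Definition Sigma11 {X : topologicalType} (B : set X) : Prop :=
  exists A : set (Baire * X)%type,
    Sigma02 (~` A) /\ B = [set x | exists p : Baire, A (p, x)].

Definition Pi11 {X : topologicalType} (B : set X) : Prop := Sigma11 (~` B).

Definition Delta11 {X : topologicalType} (B : set X) : Prop :=
  Sigma11 B /\ Pi11 B.

(* P(omega) with the Scott topology: basic open sets {A | F <= A},    *)
(* F a finite subset of omega (given by a list).                      *)
Definition Pomega : Type := set nat.
HB.instance Definition _ := Choice.on Pomega.

Definition fin_index : Type := seq nat.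
HB.instance Definition _ := Choice.on fin_index.
HB.instance Definition _ := isPointed.Build fin_index [::].

Definition scott_basic (F : fin_index) : set Pomega :=
  [set A : Pomega | forall n, n \in F -> A n].

Lemma scott_cover : \bigcup_(F in [set: fin_index]) scott_basic F = setT.
Proof.
apply/seteqP; split => // A _; exists [::] => //= n; by rewrite in_nil.
Qed.

Lemma scott_join (F G : fin_index) (A : Pomega) :
  [set: fin_index] F -> [set: fin_index] G -> scott_basic F A -> scott_basic G A ->
  exists H, [/\ [set: fin_index] H, scott_basic H A &
    scott_basic H `<=` scott_basic F `&` scott_basic G].
Proof.
move=> _ _ AF AG; exists (F ++ G); split => //.
- by move=> n; rewrite mem_cat => /orP[/AF|/AG].
- move=> B HB; split => n Hn; apply: HB; by rewrite mem_cat Hn ?orbT.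
Qed.

HB.instance Definition _ :=
  @isBaseTopological.Build Pomega fin_index [set: fin_index] scott_basic
    scott_cover scott_join.

Definition homeomorphic (X Y : topologicalType) : Prop :=
  exists (f : X -> Y) (g : Y -> X),
    [/\ cancel f g, cancel g f, continuous f & continuous g].

Definition CB0_Delta11 (X : topologicalType) : Prop :=
  exists S : set Pomega, Delta11 S /\ homeomorphic X (set_type S).

From Pilot Require Import Defs.
From HB Require Import structures.
From mathcomp Require Import all_boot all_order all_algebra.
From mathcomp Require Import all_classical all_reals.
From mathcomp Require Import topology_structure product_topology nat_topology
  subtype_topology function_spaces.
From mathcomp Require Import discrete_topology.

(* Borel sets are Delta^1_1 by induction on their rank, Sigma^1_1 being
   closed under countable unions and intersections.  Conversely, X is
   homeomorphic to a subspace S of P(omega) that is Sigma^1_1, and a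
   Delta^1_1 subset B of S is Borel by Lusin's separation theorem applied to
   the Sigma^1_1 sets B and S \ B.  For separation, a Sigma^1_1 subset of S is
   the projection of the Pi^0_2 set of triples (p, q, y) in which q witnesses
   y \in S and p witnesses the membership of y.  If two such projections were
   not Borel-separable, countable additivity of separability would give
   decreasing sequences of non-separable pieces whose k-th terms are fixed on
   the first k coordinates of all three components and lie either in the k-th
   closed set or in a basic cell contained in the k-th open set; their
   limits then belong to the two Pi^0_2 sets, so they project to distinct
   points of P(omega), and the basic cells fixing a coordinate where these
   points differ are separated by a Scott-open set, a contradiction. *)

Local Open Scope classical_set_scope.

Lemma ord_le_refl a : ord_le a a.
Proof.
elim: a => [|a IH|f IH]; first exact: ord_le_Z.
  exact: ord_le_S.
by apply: ord_le_limL => n; apply: (@ord_le_limR _ _ n).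
Qed.

Lemma ord_lt_OS_OL (g : nat -> ord) n : ord_lt (g n) (OS (OL g)).
Proof. by apply/ord_le_S/(@ord_le_limR _ _ n)/ord_le_refl. Qed.

Definition Borel {X : topologicalType} (B : set X) := exists a, Sigma0 a B.

Section BorelClosure.
Context {X : topologicalType}.

Lemma Borel_open {U : set X} : open U -> Borel U.
Proof. by move=> oU; exists Defs.ord1; apply: Sigma0_one => //; split; exact: ord_le_refl. Qed.

Lemma Borel_bigcupC (b : nat -> ord) (C : nat -> set X) :
  (forall n, Sigma0 (b n) (C n)) -> Borel (\bigcup_(n in [set: nat]) ~` C n).
Proof.
(* The extra index [c 0 = ord2] pushes the rank above 2, as [Sigma0_big] requires. *)
pose c n := if n is n'.+1 then b n' else Defs.ord2.
by exists (OS (OL c)); apply: Sigma0_big => [|n|//]; [exact: (ord_lt_OS_OL c 0)|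
  exact: (ord_lt_OS_OL c n.+1)].
Qed.

Lemma Borel_setC (B : set X) : Borel B -> Borel (~` B).
Proof.
move=> [a Ha]; have -> : ~` B = \bigcup_(n in [set: nat]) ~` (fun _ => B) n.
  by apply/seteqP; split => [x Bx|x [n _ Bx]] //; exists 0.
exact: (@Borel_bigcupC (fun _ => a)).
Qed.

Lemma Borel_bigcup (C : nat -> set X) :
  (forall n, Borel (C n)) -> Borel (\bigcup_(n in [set: nat]) C n).
Proof.
move=> BC; have [c Hc] := choice (fun n => @Borel_setC (C n) (BC n)).
under eq_bigcupr do rewrite -[C _]setCK.
exact: (@Borel_bigcupC c (fun n => ~` C n)).
Qed.

Lemma Borel_bigcap (C : nat -> set X) :
  (forall n, Borel (C n)) -> Borel (\bigcap_(n in [set: nat]) C n).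
Proof.
move=> BC; rewrite -[X in Borel X]setCK setC_bigcap.
by apply/Borel_setC/Borel_bigcup => n; apply: Borel_setC.
Qed.

End BorelClosure.

Lemma fst_continuous {A B : topologicalType} : continuous (@fst A B).
Proof. by move=> z; apply: cvg_fst. Qed.

Lemma snd_continuous {A B : topologicalType} : continuous (@snd A B).
Proof. by move=> z; apply: cvg_snd. Qed.

Lemma map_fst_continuous {A B C : topologicalType} (f : A -> B) :
  continuous f -> continuous (fun z : A * C => (f z.1, z.2)).
Proof.
move=> cf z; apply: cvg_pair; last exact: (@snd_continuous A C z).
exact: (continuous_comp (@fst_continuous A C z) (cf z.1)).
Qed.

Lemma map_snd_continuous {A B C : topologicalType} (f : C -> B) :
  continuous f -> continuous (fun z : A * C => (z.1, f z.2)).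
Proof.
move=> cf z; apply: cvg_pair; first exact: (@fst_continuous A C z).
exact: (continuous_comp (@snd_continuous A C z) (cf z.2)).
Qed.

Lemma Baire_coord_continuous (i : nat) : continuous (fun p : Baire => p i).
Proof. by move=> p; exact: (@proj_continuous nat (fun _ => nat) i p). Qed.

Lemma Baire_reindex_continuous (s : nat -> nat) :
  continuous (fun p : Baire => (fun i => p (s i)) : Baire).
Proof. by move=> p; apply/pointwise_cvgP => t; exact: Baire_coord_continuous. Qed.

Section Sigma02Closure.
Context {X : topologicalType}.

Lemma Sigma02_open (U : set X) : open U -> Sigma02 U.
Proof.
move=> oU; exists (fun _ => U), (fun _ => set0); split; first by split => //; exact: open0.
by apply/seteqP; split => [x Ux|x [n _ [Ux nU]]] //; exists 0 => //; split.
Qed.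

Lemma Sigma02_setC_open (U : set X) : open U -> Sigma02 (~` U).
Proof.
move=> oU; exists (fun _ => setT), (fun _ => U); split; first by split => //; exact: openT.
by apply/seteqP; split => [x Ux|x [n _ [Ux nU]]] //; exists 0 => //; split.
Qed.

Lemma Sigma02_bigcup (C : nat -> set X) :
  (forall n, Sigma02 (C n)) -> Sigma02 (\bigcup_(n in [set: nat]) C n).
Proof.
move=> SC; have [UV HUV] := choice (fun n => let: ex_intro U (ex_intro V h) := SC n in
  ex_intro (fun uv : (nat -> set X) * (nat -> set X) =>
    (forall m, open (uv.1 m) /\ open (uv.2 m)) /\
    C n = \bigcup_(m in [set: nat]) (uv.1 m `\` uv.2 m)) (U, V) h).
pose W (i : bool) k := if @unpickle (nat * nat)%type k is Some (n, m)
  then (if i then (UV n).1 m else (UV n).2 m) else set0.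
exists (W true), (W false); split => [k|].
  rewrite /W; case: unpickle => [[n m]|]; last by split; exact: open0.
  by case: (HUV n) => /(_ m).
apply/seteqP; split => [x [n _]|x [k _]].
  by case: (HUV n) => _ -> [m _ Hm]; exists (pickle (n, m)); rewrite // /W pickleK.
rewrite /W; case: unpickle => [[n m] Hm|[]//].
by exists n => //; case: (HUV n) => _ ->; exists m.
Qed.

Lemma Sigma02_setU (A B : set X) : Sigma02 A -> Sigma02 B -> Sigma02 (A `|` B).
Proof.
move=> SA SB; have -> : A `|` B = \bigcup_(n in [set: nat]) (if n is 0 then A else B).
  apply/seteqP; split => [x [Ax|Bx]|x [[|n] _ H]]; by [exists 0|exists 1|left|right].
by apply: Sigma02_bigcup => -[].
Qed.

Lemma Sigma02_setI_open (O A : set X) : open O -> Sigma02 A -> Sigma02 (O `&` A).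
Proof.
move=> oO [U [V [oUV ->]]]; exists (fun n => O `&` U n), V; split.
  by move=> n; case: (oUV n) => oU oV; split => //; exact: openI.
apply/seteqP; split => [x [Ox [n _ [Ux Vx]]]|x [n _ [[Ox Ux] Vx]]]; first by exists n.
by split => //; exists n.
Qed.

End Sigma02Closure.

Lemma Sigma02_preimage {X Y : topologicalType} {f : X -> Y} {B : set Y} :
  continuous f -> Sigma02 B -> Sigma02 (f @^-1` B).
Proof.
move=> /continuousP cf [U [V [oUV ->]]].
exists (fun n => f @^-1` U n), (fun n => f @^-1` V n); split.
  by move=> n; case: (oUV n) => oU oV; split; apply: cf.
rewrite preimage_bigcup; apply: eq_bigcupr => n _.
by rewrite setDE preimage_setI -preimage_setC.
Qed.

Lemma Sigma0_preimage {X Y : topologicalType} {f : X -> Y} {a} {B : set Y} :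
  continuous f -> Sigma0 a B -> Sigma0 a (f @^-1` B).
Proof.
move=> cf; elim=> {a B} [a Ha|a A Ha oA|a A Ha SA|a b C ltb ltC _ IH].
- by rewrite preimage_set0; apply: Sigma0_zero.
- by apply: Sigma0_one => //; move/continuousP: cf; apply.
- by apply: Sigma0_two => //; apply: Sigma02_preimage.
- rewrite preimage_bigcup; under eq_bigcupr do rewrite -preimage_setC.
  exact: Sigma0_big.
Qed.

Lemma Borel_preimage {X Y : topologicalType} {f : X -> Y} {B : set Y} :
  continuous f -> Borel B -> Borel (f @^-1` B).
Proof. by move=> cf [a Ha]; exists a; apply: Sigma0_preimage. Qed.

Section Sigma11Closure.
Context {X : topologicalType}.

Lemma Sigma11_Pi02 (B : set X) : Sigma02 (~` B) -> Sigma11 B.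
Proof.
move=> SB; exists [set z : Baire * X | B z.2]; split.
  by have := Sigma02_preimage snd_continuous SB.
by apply/seteqP; split => [x Bx|x [p Bx]] //; exists (fun _ => 0%N).
Qed.

Lemma Sigma11_bigcup (B : nat -> set X) :
  (forall n, Sigma11 (B n)) -> Sigma11 (\bigcup_(n in [set: nat]) B n).
Proof.
move=> SB; have [A HA] := choice SB.
pose shift (z : Baire * X) := ((fun i => z.1 i.+1) : Baire, z.2).
exists [set z | A (z.1 0) (shift z)]; split.
  have -> : ~` [set z | A (z.1 0) (shift z)] = \bigcup_(n in [set: nat])
      ([set z : Baire * X | z.1 0 = n] `&` shift @^-1` (~` A n)).
    by apply/seteqP; split => [z Hz|z [n _ [/= -> Hz]]] //; exists (z.1 0).
  apply: Sigma02_bigcup => n; apply: Sigma02_setI_open.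
    have -> : [set z : Baire * X | z.1 0 = n] =
      fst @^-1` ((fun p : Baire => p 0) @^-1` [set n]) by [].
    apply: (proj1 (continuousP _) fst_continuous).
    exact: (proj1 (continuousP _) (Baire_coord_continuous 0)) _ (discrete_open _).
  apply: Sigma02_preimage; last by case: (HA n).
  exact: map_fst_continuous (Baire_reindex_continuous S).
apply/seteqP; split => [x [n _]|x [p /= Hp]].
  by case: (HA n) => _ -> [p Hp]; exists (fun i => if i is i'.+1 then p i' else n).
by exists (p 0) => //; case: (HA (p 0)) => _ ->; exists (fun i => p i.+1).
Qed.

Lemma Sigma11_bigcap (B : nat -> set X) :
  (forall n, Sigma11 (B n)) -> Sigma11 (\bigcap_(n in [set: nat]) B n).
Proof.
move=> SB; have [A HA] := choice SB.
pose slice (n : nat) (z : Baire * X) := ((fun i => z.1 (pickle (n, i))) : Baire, z.2).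
exists [set z | forall n, A n (slice n z)]; split.
  have -> : ~` [set z | forall n, A n (slice n z)] =
      \bigcup_(n in [set: nat]) slice n @^-1` (~` A n).
    apply/seteqP; split => [z /= /boolp.existsNP [n Hn]|z [n _ /= Hz] Hall].
      by exists n.
    exact: Hz (Hall n).
  apply: Sigma02_bigcup => n; apply: Sigma02_preimage; last by case: (HA n).
  exact: map_fst_continuous (Baire_reindex_continuous _).
apply/seteqP; split => [x Bx|x [p /= Hp] n _]; last first.
  by case: (HA n) => _ ->; exists (slice n (p, x)).1.
have Ax n : exists p : Baire, A n (p, x) by have := Bx n I; case: (HA n) => _ ->.
have [q Hq] := choice Ax.
pose p : Baire := fun k => if @unpickle (nat * nat)%type k is Some (n, i) then q n i else 0%N.
exists p => n /=; suff -> : slice n (p, x) = (q n, x) by exact: Hq.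
by congr pair; apply: boolp.funext => i; rewrite /p /= pickleK.
Qed.

End Sigma11Closure.

Lemma Sigma11_preimage {X Y : topologicalType} {g : Y -> X} {B : set X} :
  continuous g -> Sigma11 B -> Sigma11 (g @^-1` B).
Proof.
move=> cg [A [SA ->]]; exists ((fun z : Baire * Y => (z.1, g z.2)) @^-1` A); split.
  by rewrite preimage_setC; apply: Sigma02_preimage => //; exact: map_snd_continuous.
by apply/seteqP; split => y [p Hp]; exists p.
Qed.

Lemma Delta11_preimage {X Y : topologicalType} {g : Y -> X} {B : set X} :
  continuous g -> Delta11 B -> Delta11 (g @^-1` B).
Proof.
move=> cg [SB PB]; split; first exact: Sigma11_preimage.
by rewrite /Pi11 preimage_setC; apply: Sigma11_preimage.
Qed.

Lemma Sigma0_Delta11 {X : topologicalType} a (B : set X) : Sigma0 a B -> Delta11 B.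
Proof.
rewrite /Delta11 /Pi11; elim=> {a B} [a _|a A _ oA|a A _ SA|a b C _ _ _ IH].
- split; apply: Sigma11_Pi02; first by rewrite setC0; apply/Sigma02_open/openT.
  by rewrite setCK; apply/Sigma02_open/open0.
- split; apply: Sigma11_Pi02; first exact: Sigma02_setC_open.
  by rewrite setCK; apply: Sigma02_open.
- split; last by apply: Sigma11_Pi02; rewrite setCK.
  case: SA => U [V [oUV ->]]; apply: Sigma11_bigcup => n; apply: Sigma11_Pi02.
  rewrite setDE setCI setCK; case: (oUV n) => oU oV.
  by apply: Sigma02_setU; [exact: Sigma02_setC_open|exact: Sigma02_open].
- split; first by apply: Sigma11_bigcup => n; case: (IH n).
  by rewrite setC_bigcup; apply: Sigma11_bigcap => n; rewrite setCK; case: (IH n).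
Qed.

Lemma Sigma11E {X : topologicalType} (B : set X) : Sigma11 B ->
  exists (R : set (Baire * X)) (U V : nat -> set (Baire * X)),
    [/\ forall k, open (U k) /\ open (V k),
        forall z, R z <-> (forall k, U k z -> V k z) &
        forall x, B x <-> exists p, R (p, x)].
Proof.
move=> [R [[U [V [oUV CR]]] ->]]; exists R, U, V; split => // z.
split => [Rz k Uz|UV]; apply: boolp.contrapT.
  by move=> nVz; have : (~` R) z by rewrite CR; exists k.
by move=> nRz; have : (~` R) z := nRz; rewrite CR => -[k _ [Uz nVz]]; exact/nVz/UV.
Qed.

Definition nbhs_by_prefix {Z : topologicalType} (f : Z -> Pomega) :=
  forall (B : set Z) (z : Z), nbhs z B ->
    exists n, forall z', (forall i, (i < n)%N -> (f z' i <-> f z i)) -> B z'.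

Lemma Pomega_open_prefix {W : set Pomega} {y : Pomega} : open W -> W y ->
  exists n, forall y' : Pomega, (forall i, (i < n)%N -> (y' i <-> y i)) -> W y'.
Proof.
move=> [D _ <-] [F DF Fy]; exists (\max_(x <- F) x.+1) => y' y'y.
by exists F => // x xF; apply/(y'y x (leq_bigmax_seq _ xF isT))/Fy.
Qed.

Lemma Pomega_nbhs_by_prefix : nbhs_by_prefix (@id Pomega).
Proof.
move=> B y; rewrite nbhsE => -[W [oW Wy] WB].
by have [n Hn] := Pomega_open_prefix oW Wy; exists n => y' /Hn /WB.
Qed.

Lemma subspace_nbhs_by_prefix (S : set Pomega) : nbhs_by_prefix (@set_val _ S).
Proof.
move=> B s; rewrite nbhsE => -[B0 [[W oW <-] B0s] B0B].
by have [n Hn] := Pomega_open_prefix oW B0s; exists n => s' /Hn /B0B.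
Qed.

Lemma Baire_nbhs_prefix {A : set Baire} {q : Baire} : nbhs q A ->
  exists n, forall q' : Baire, (forall i, (i < n)%N -> q' i = q i) -> A q'.
Proof.
move=> qA; apply: boolp.contrapT => /boolp.forallNP away.
have far n : exists q' : Baire, (forall i, (i < n)%N -> q' i = q i) /\ ~ A q'.
  by have /boolp.existsNP [q' /boolp.not_implyP [agree nA]] := away n; exists q'.
have [qs Hqs] := choice far.
have qs_cvg : qs @ \oo --> q.
  apply/pointwise_cvgP => t; apply/discrete_cvg; rewrite nbhs_simpl.
  by apply: filterS (nbhs_infty_gt t) => m tm; exact: (proj1 (Hqs m) t tm).
have [N _ HN] := qs_cvg _ qA.
by case: (Hqs N) => _; apply; apply: HN; rewrite /= leqnn.
Qed.

Lemma Baire_prod_open_prefix {Z : topologicalType} {f : Z -> Pomega}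
    {W : set (Baire * Z)} {q : Baire} {z : Z} :
  nbhs_by_prefix f -> open W -> W (q, z) ->
  exists n, forall q' z', (forall i, (i < n)%N -> q' i = q i /\ (f z' i <-> f z i)) ->
    W (q', z').
Proof.
move=> fZ oW Wqz; have [[A B] /= [qA zB] ABW] : nbhs (q, z) W.
  exact: open_nbhs_nbhs.
have [n1 H1] := Baire_nbhs_prefix qA; have [n2 H2] := fZ _ _ zB.
exists (maxn n1 n2) => q' z' agree; apply: (ABW (q', z')); split.
  by apply: H1 => i i1; apply: (proj1 (agree i _)); rewrite leq_max i1.
by apply: H2 => i i2; apply: (proj2 (agree i _)); rewrite leq_max i2 orbT.
Qed.

Section LusinSeparation.
Variables (T : Type) (code : nat -> T -> nat).
Hypothesis code_succ : forall j w w', code j.+1 w = code j.+1 w' -> code j w = code j w'.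
Hypothesis code_limit : forall u : nat -> T,
  (forall j, code j (u j.+1) = code j (u j)) -> exists w, forall j, code j w = code j (u j).

Definition level (l m : nat) : set T := [set w | code l w = m].

Definition adherent (A : set T) (w : T) := forall j, exists2 v, A v & code j v = code j w.

(* [Phi] is the Pi^0_2 set \bigcap_k (F k `|` O k) for the topology generated
   by the levels; openness of O k and closedness of F k are only needed in the
   weak forms of [presentation_open] and [presentation_closed]. *)
Record Pi02_presentation (Phi : set T) (O F : nat -> set T) : Prop := {
  presentation_cover : forall k, Phi `<=` F k `|` O k;
  presentation_open : forall k w, Phi w -> O k w -> exists l, level l (code l w) `<=` O k;
  presentation_closed : forall w, (forall k, O k w \/ adherent (Phi `&` F k) w) -> Phi w }.

Definition decided (O F : set T) (Y : set T) :=
  Y `<=` F \/ exists l m, Y `<=` level l m /\ level l m `<=` O.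

Definition fine (O F : nat -> set T) (k : nat) (Y : set T) :=
  (exists m, Y `<=` level k m) /\ decided (O k) (F k) Y.

Lemma code_le i j w w' : (i <= j)%N -> code j w = code j w' -> code i w = code i w'.
Proof.
move=> /subnK <-; elim: (j - i)%N => [//|d IH] E.
by apply/IH/code_succ; rewrite -addSn.
Qed.

Lemma level_cover (Z : set T) k : Z `<=` \bigcup_(m in [set: nat]) (Z `&` level k m).
Proof. by move=> y Zy; exists (code k y). Qed.

Lemma decided_cover {Phi O F} k {Z : set T} : Pi02_presentation Phi O F -> Z `<=` Phi ->
  exists D : nat -> set T, Z `<=` \bigcup_(n in [set: nat]) D n /\
    forall n, D n `<=` Z /\ decided (O k) (F k) (D n).
Proof.
move=> [cover opn _] ZPhi.
(* The pieces are Z `&` F k and the Z `&` level l m whose level lies in O k. *)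
exists (fun n => if n is n'.+1 then
  if @unpickle (nat * nat)%type n' is Some (l, m) then
    if `[< level l m `<=` O k >] then Z `&` level l m else set0
  else set0
  else Z `&` F k); split.
  move=> y Zy; case: (cover k y (ZPhi y Zy)) => [Fy|Oy]; first by exists 0.
  have [l lO] := opn k y (ZPhi y Zy) Oy; exists (pickle (l, code l y)).+1 => //.
  by rewrite pickleK; case: boolp.asboolP.
case=> [|n]; first by split=> [y []|]; [|left=> y []].
case: unpickle => [[l m]|]; last by split=> //; left.
case: boolp.asboolP => [lmO|_]; last by split=> //; left.
by split=> [y []//|]; right; exists l, m; split=> // y [].
Qed.

Lemma fine_chain_limit {Chi O F} (Z : nat -> set T) : Pi02_presentation Chi O F ->
  (forall j, Z j.+1 `<=` Z j) -> (forall j, Z j `<=` Chi) -> (forall j, Z j !=set0) ->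
  (forall k, fine O F k (Z k.+1)) ->
  exists2 w, Chi w & forall j, Z j.+1 `<=` level j (code j w).
Proof.
move=> [_ _ closed] Zdec ZChi Zne Zfine.
have Zmono i j : (i <= j)%N -> Z j `<=` Z i.
  by move=> /subnK <-; elim: (j - i)%N => [//|d IH] y /Zdec /IH.
have [u Zu] := choice (fun j => Zne j.+1).
have Zlev j : Z j.+1 `<=` level j (code j (u j)).
  by have [[m Zm] _] := Zfine j; move=> y Zy; rewrite /level /= (Zm _ Zy) (Zm _ (Zu j)).
have [w uw] : exists w, forall j, code j w = code j (u j).
  by apply: code_limit => j; apply: (Zlev j); exact: Zdec.
have Zw i j : (i <= j)%N -> Z j.+1 `<=` level i (code i w).
  by move=> ij y /Zlev; rewrite /level -uw; exact: code_le.
have u_near k j : Z k.+1 (u (maxn j k)) /\ code j (u (maxn j k)) = code j w.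
  split; first by apply: Zmono (Zu _); rewrite ltnS leq_maxr.
  by apply: Zw (Zu _); exact: leq_maxl.
exists w => [|j]; last exact: Zw.
apply: closed => k; case: (Zfine k) => _ [ZF|[l [m [Zlm lmO]]]].
  right => j; have [Zk near] := u_near k j; exists (u (maxn j k)) => //.
  by split; [exact: ZChi Zk|exact: ZF].
left; apply: lmO; have [Zk ul] := u_near k l.
by rewrite /level /= -ul; exact: Zlm.
Qed.

Section Separability.
Variable Sep : set T -> set T -> Prop.
Hypothesis Sep_bigcup : forall Z Z' : nat -> set T, (forall m n, Sep (Z m) (Z' n)) ->
  Sep (\bigcup_(m in [set: nat]) Z m) (\bigcup_(n in [set: nat]) Z' n).
Hypothesis Sep_sub : forall Z Z' Z1 Z1', Sep Z Z' -> Z1 `<=` Z -> Z1' `<=` Z' -> Sep Z1 Z1'.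
Hypothesis Sep0l : forall Z', Sep set0 Z'.
Hypothesis Sep0r : forall Z, Sep Z set0.

Lemma nonsep_cover {Z Z' : set T} {D D' : nat -> set T} :
  Z `<=` \bigcup_(m in [set: nat]) D m -> Z' `<=` \bigcup_(n in [set: nat]) D' n ->
  ~ Sep Z Z' -> exists m n, ~ Sep (D m) (D' n).
Proof.
move=> ZD ZD' nS; apply: boolp.contrapT => /boolp.forallNP allS; apply: nS.
apply: Sep_sub ZD ZD'; apply: Sep_bigcup => m n.
by move: (allS m) => /boolp.forallNP/(_ n)/boolp.contrapT.
Qed.

Lemma nonsep_nonempty {Z Z' : set T} : ~ Sep Z Z' -> Z !=set0 /\ Z' !=set0.
Proof.
by move=> nS; split; apply: boolp.contrapT => /nonemptyPn Z0; apply: nS; rewrite Z0.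
Qed.

Section TwoPresentations.
Variables (Phi Psi : set T) (O F O' F' : nat -> set T).
Hypotheses (Phi_pres : Pi02_presentation Phi O F) (Psi_pres : Pi02_presentation Psi O' F').

Lemma fine_refine k {Z Z' : set T} : Z `<=` Phi -> Z' `<=` Psi -> ~ Sep Z Z' ->
  exists Z1 Z1', [/\ Z1 `<=` Z, Z1' `<=` Z', ~ Sep Z1 Z1',
    fine O F k Z1 & fine O' F' k Z1'].
Proof.
move=> ZPhi ZPsi nS.
have [m [m' nSm]] := nonsep_cover (level_cover Z k) (level_cover Z' k) nS.
have [D [covD HD]] :=
  decided_cover k Phi_pres (subset_trans (@subIsetl _ Z (level k m)) ZPhi).
have [D' [covD' HD']] :=
  decided_cover k Psi_pres (subset_trans (@subIsetl _ Z' (level k m')) ZPsi).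
have [n [n' nSn]] := nonsep_cover covD covD' nSm.
have [DZ dD] := HD n; have [DZ' dD'] := HD' n'.
exists (D n), (D' n'); split => //.
- by move=> y /DZ [].
- by move=> y /DZ' [].
- by split => //; exists m => y /DZ [].
- by split => //; exists m' => y /DZ' [].
Qed.

Lemma nonsep_fine_chain : ~ Sep Phi Psi -> exists Z Z' : nat -> set T, forall j,
  [/\ Z j `<=` Phi /\ Z' j `<=` Psi, ~ Sep (Z j) (Z' j),
      Z j.+1 `<=` Z j /\ Z' j.+1 `<=` Z' j, fine O F j (Z j.+1) & fine O' F' j (Z' j.+1)].
Proof.
move=> nS; pose ok (st : set T * set T) := [/\ st.1 `<=` Phi, st.2 `<=` Psi & ~ Sep st.1 st.2].
(* Guarding by [ok x.2] makes the step relation total, so [choice] applies. *)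
have step (x : nat * (set T * set T)) : exists st, ok x.2 ->
    [/\ ok st, st.1 `<=` x.2.1 /\ st.2 `<=` x.2.2, fine O F x.1 st.1 & fine O' F' x.1 st.2].
  case: x => k [Z Z']; have [[/= ZPhi ZPsi nSZ]|nok] := boolp.pselect (ok (Z, Z')); last first.
    by exists (Z, Z') => /nok.
  have [Z1 [Z1' [ZZ1 ZZ1' nS1 fine1 fine1']]] := fine_refine k ZPhi ZPsi nSZ.
  exists (Z1, Z1') => _; split => //.
  by split => //=; [exact: subset_trans ZZ1 ZPhi|exact: subset_trans ZZ1' ZPsi].
have [next Hnext] := choice step.
pose st := fix st j := if j is j'.+1 then next (j', st j') else (Phi, Psi).
have st_ok j : ok (st j) by elim: j => [|j IH]; [split|case: (Hnext (j, st j) IH)].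
exists (fun j => (st j).1), (fun j => (st j).2) => j.
by case: (st_ok j) => ? ? ?; case: (Hnext (j, st j) (st_ok j)) => _ ? ? ?; split.
Qed.

Hypothesis cells_sep : forall {w w'}, Phi w -> Psi w' ->
  exists j, Sep (level j (code j w)) (level j (code j w')).

Theorem Lusin_separation : Sep Phi Psi.
Proof.
apply: boolp.contrapT => /nonsep_fine_chain [Z [Z' HZ]].
have [w Phi_w Zw] : exists2 w, Phi w & forall j, Z j.+1 `<=` level j (code j w).
  apply: (fine_chain_limit Z Phi_pres) => j; have [[? ?] nSj [? ?] ? ?] := HZ j => //.
  by have [] := nonsep_nonempty nSj.
have [w' Psi_w' Zw'] : exists2 w', Psi w' & forall j, Z' j.+1 `<=` level j (code j w').
  apply: (fine_chain_limit Z' Psi_pres) => j; have [[? ?] nSj [? ?] ? ?] := HZ j => //.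
  by have [] := nonsep_nonempty nSj.
have [j Sj] := cells_sep Phi_w Psi_w'.
by have [_ nS _ _ _] := HZ j.+1; apply: nS; apply: Sep_sub Sj (Zw j) (Zw' j).
Qed.

End TwoPresentations.
End Separability.
End LusinSeparation.

Arguments level {T} code l m.
Arguments adherent {T} code A w.
Arguments Pi02_presentation {T} code Phi O F.

Definition code_space := (Baire * Baire * Pomega)%type.

Fixpoint prefix_code (j : nat) (w : code_space) : nat :=
  if j is j'.+1 then pickle (prefix_code j' w, (w.1.1 j', w.1.2 j', `[< w.2 j' >]))
  else 0%N.

Lemma prefix_codeP j w w' : prefix_code j w = prefix_code j w' <->
  (forall i, (i < j)%N -> [/\ w.1.1 i = w'.1.1 i, w.1.2 i = w'.1.2 i & (w.2 i <-> w'.2 i)]).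
Proof.
elim: j => [|j IH] /=; first by split => // _ i.
split => [/(pcan_inj pickleK) [/IH agree e1 e2 e3] i|agree].
  rewrite ltnS leq_eqVlt => /orP[/eqP ->|/agree //].
  by split => //; exact: boolp.asbool_eq_equiv e3.
have [-> -> /boolp.asbool_equiv_eq ->] := agree j (ltnSn j).
by have /IH -> : forall i, (i < j)%N -> _ := fun i ij => agree i (ltnW ij).
Qed.

Lemma prefix_code_succ j w w' :
  prefix_code j.+1 w = prefix_code j.+1 w' -> prefix_code j w = prefix_code j w'.
Proof. by move=> /prefix_codeP agree; apply/prefix_codeP => i ij; apply/agree/ltnW. Qed.

Lemma prefix_code_limit (u : nat -> code_space) :
  (forall j, prefix_code j (u j.+1) = prefix_code j (u j)) ->
  exists w, forall j, prefix_code j w = prefix_code j (u j).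
Proof.
move=> coh; exists (((fun i => (u i.+1).1.1 i) : Baire, (fun i => (u i.+1).1.2 i) : Baire),
  (fun i => (u i.+1).2 i) : Pomega).
by elim => [//|j IH] /=; rewrite IH -coh.
Qed.

Section SubspaceSeparation.
Variable S : set Pomega.

Lemma set_val_inj : injective (@set_val _ S).
Proof. by rewrite set_valE; exact: val_inj. Qed.

Lemma set_valP (s : set_type S) : S (set_val s).
Proof. by rewrite set_valE; case: s => y /= /set_mem. Qed.

Lemma set_val_onto y : S y -> exists s : set_type S, set_val s = y.
Proof. by move=> Sy; exists (exist _ y (mem_set Sy)); rewrite set_valE. Qed.

Lemma open_subspace_coord n : open [set s : set_type S | set_val s n].
Proof.
exists (scott_basic [:: n]); first by exists [set [:: n]] => //; rewrite bigcup_set1.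
by apply/seteqP; split => s /= sn; [apply: sn; rewrite inE|move=> m /[!inE] /eqP ->].
Qed.

Definition trace (Z : set code_space) : set (set_type S) :=
  [set s | exists2 w, Z w & set_val s = w.2].

Definition Borel_separated (Z Z' : set code_space) :=
  exists C : set (set_type S), [/\ Borel C, trace Z `<=` C & trace Z' `<=` ~` C].

Lemma Borel_separated_bigcup (Z Z' : nat -> set code_space) :
  (forall m n, Borel_separated (Z m) (Z' n)) ->
  Borel_separated (\bigcup_(m in [set: nat]) Z m) (\bigcup_(n in [set: nat]) Z' n).
Proof.
move=> sep; have row m : exists Cm : nat -> set (set_type S), forall n,
    [/\ Borel (Cm n), trace (Z m) `<=` Cm n & trace (Z' n) `<=` ~` Cm n].
  by have [Cm HCm] := choice (sep m); exists Cm.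
have [C HC] := choice row.
exists (\bigcup_(m in [set: nat]) \bigcap_(n in [set: nat]) C m n); split.
- by apply: Borel_bigcup => m; apply: Borel_bigcap => n; case: (HC m n).
- move=> s [w [m _ Zw] sw]; exists m => // n _.
  by case: (HC m n) => _ + _; apply; exists w.
- move=> s [w [n _ Zw] sw] [m _ /(_ n I)].
  by case: (HC m n) => _ _; apply; exists w.
Qed.

Lemma Borel_separated_sub Z Z' Z1 Z1' :
  Borel_separated Z Z' -> Z1 `<=` Z -> Z1' `<=` Z' -> Borel_separated Z1 Z1'.
Proof.
move=> [C [BC ZC Z'C]] Z1Z Z1'Z'; exists C; split => // s [w Zw sw].
  by apply: ZC; exists w => //; exact: Z1Z.
by apply: Z'C; exists w => //; exact: Z1'Z'.
Qed.

Lemma Borel_separated0l Z' : Borel_separated set0 Z'.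
Proof. by exists set0; split => [|s [w []]|s _ []]; exact: Borel_open open0. Qed.

Lemma Borel_separated0r Z : Borel_separated Z set0.
Proof. by exists setT; split => [|s _|s [w []]] //; exact: Borel_open openT. Qed.

Lemma Borel_separated_cells w w' : w.2 <> w'.2 -> exists j,
  Borel_separated (level prefix_code j (prefix_code j w))
                  (level prefix_code j (prefix_code j w')).
Proof.
move=> ww'; have [n wn] : exists n, ~ (w.2 n <-> w'.2 n).
  apply: boolp.contrapT => /boolp.forallNP agree; apply/ww'/boolp.funext => n.
  by apply: boolp.propext; apply: boolp.contrapT; exact: agree.
have cellP v u : level prefix_code n.+1 (prefix_code n.+1 u) v -> (v.2 n <-> u.2 n).
  by move=> /prefix_codeP /(_ n (ltnSn n)) [].
have D_Borel := Borel_open (open_subspace_coord n).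
exists n.+1; have [w2n|nw2n] := boolp.pselect (w.2 n).
  exists [set s | set_val s n]; split => // s [v /cellP vw /= ->]; first exact/vw.
  by move=> /vw w'n; apply: wn.
exists (~` [set s | set_val s n]); split; first exact: Borel_setC.
  by move=> s [v /cellP vw /= ->] /vw.
move=> s [v /cellP vw /= ->] nvn; apply/nvn/vw; apply: boolp.contrapT => nw'n.
by apply: wn; split => [/nw2n|/nw'n].
Qed.

End SubspaceSeparation.

Arguments set_val_inj {S}.
Arguments set_valP {S}.
Arguments set_val_onto {S y}.

Notation cell j w := (level prefix_code j (prefix_code j w)).

Lemma cell_open {W : set (Baire * Pomega)} {w : code_space} : open W -> W (w.1.2, w.2) ->
  exists n, cell n w `<=` [set v | W (v.1.2, v.2)].
Proof.
move=> oW Ww; have [n Hn] := Baire_prod_open_prefix Pomega_nbhs_by_prefix oW Ww.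
by exists n => v /prefix_codeP agree; apply: Hn => i /agree [].
Qed.

Lemma cell_open_subspace {S : set Pomega} {W : set (Baire * set_type S)} {w s} :
  open W -> W (w.1.1, s) -> set_val s = w.2 ->
  exists n, cell n w `<=` [set v | forall s', set_val s' = v.2 -> W (v.1.1, s')].
Proof.
move=> oW Ws sw; have [n Hn] := Baire_prod_open_prefix (subspace_nbhs_by_prefix S) oW Ws.
by exists n => v /prefix_codeP agree s' s'v; apply: Hn => i /agree []; rewrite s'v sw.
Qed.

Section Witnesses.
Variables (S : set Pomega) (R : set (Baire * Pomega)) (U V : nat -> set (Baire * Pomega)).
Hypothesis UV_open : forall k, open (U k) /\ open (V k).
Hypothesis R_Pi02 : forall z, R z <-> (forall k, U k z -> V k z).
Hypothesis S_proj : forall y, S y <-> exists q, R (q, y).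
Variables (P : set (Baire * set_type S)) (U' V' : nat -> set (Baire * set_type S)).
Hypothesis UV'_open : forall k, open (U' k) /\ open (V' k).
Hypothesis P_Pi02 : forall z, P z <-> (forall k, U' k z -> V' k z).

Definition witnesses : set code_space :=
  [set w | R (w.1.2, w.2) /\ forall s : set_type S, set_val s = w.2 -> P (w.1.1, s)].

(* Even indices present the condition on the S-witness w.1.2, odd ones the
   condition on the P-witness w.1.1. *)
Definition wit_open (k : nat) : set code_space := if odd k
  then [set w | forall s : set_type S, set_val s = w.2 -> V' k./2 (w.1.1, s)]
  else [set w | V k./2 (w.1.2, w.2)].

Definition wit_closed (k : nat) : set code_space := if odd k
  then [set w | forall s : set_type S, set_val s = w.2 -> ~ U' k./2 (w.1.1, s)]
  else [set w | ~ U k./2 (w.1.2, w.2)].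

Lemma witnesses_S {w} : witnesses w -> S w.2.
Proof. by move=> [Rw _]; apply/S_proj; exists w.1.2. Qed.

Lemma witnesses_cover k : witnesses `<=` wit_closed k `|` wit_open k.
Proof.
move=> w wit; have [s sw] := set_val_onto (witnesses_S wit); case: wit => Rw Pw.
have only_s s' : set_val s' = w.2 -> s' = s by rewrite -sw => /set_val_inj.
rewrite /wit_closed /wit_open; case: (odd k).
  have [Vs|nVs] := boolp.pselect (V' k./2 (w.1.1, s)); [right|left] => s' /only_s -> //.
  by move=> Us; apply/nVs/(proj1 (P_Pi02 _) (Pw _ sw)).
have [Vw|nVw] := boolp.pselect (V k./2 (w.1.2, w.2)); [by right|left] => Uw.
exact/nVw/(proj1 (R_Pi02 _) Rw).
Qed.

Lemma witnesses_open k w : witnesses w -> wit_open k w ->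
  exists l, cell l w `<=` wit_open k.
Proof.
move=> wit; rewrite /wit_open; case: (odd k) => Ow.
  have [s sw] := set_val_onto (witnesses_S wit).
  exact: cell_open_subspace (proj2 (UV'_open _)) (Ow _ sw) sw.
exact: cell_open (proj2 (UV_open _)) Ow.
Qed.

Lemma witnesses_closed w :
  (forall k, wit_open k w \/ adherent prefix_code (witnesses `&` wit_closed k) w) ->
  witnesses w.
Proof.
move=> hk; have Rw : R (w.1.2, w.2).
  apply/R_Pi02 => i Ui; have := hk i.*2; rewrite /wit_open /wit_closed odd_double doubleK.
  case=> [//|adh]; have [n Hn] := cell_open (proj1 (UV_open i)) Ui.
  by have [v [_ nUv] vw] := adh n; case: (nUv (Hn v vw)).
split => // s sw; apply/P_Pi02 => i Ui.
have := hk i.*2.+1; rewrite /wit_open /wit_closed /= odd_double uphalf_double.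
case=> [/(_ s sw) //|adh]; have [n Hn] := cell_open_subspace (proj1 (UV'_open i)) Ui sw.
have [v [wit_v nUv] vw] := adh n; have [s' s'v] := set_val_onto (witnesses_S wit_v).
by case: (nUv s' s'v (Hn v vw s' s'v)).
Qed.

Lemma witnesses_presentation : Pi02_presentation prefix_code witnesses wit_open wit_closed.
Proof.
split; [exact: witnesses_cover|exact: witnesses_open|exact: witnesses_closed].
Qed.

Lemma witnesses_trace s p : P (p, s) -> trace S witnesses s.
Proof.
move=> Pps; have [q Rq] := (proj1 (S_proj _)) (set_valP s).
by exists ((p, q), set_val s) => //; split => // s' /set_val_inj ->.
Qed.

End Witnesses.

Arguments Lusin_separation {T code} _ _ {Sep} _ _ _ _ {Phi Psi O F O' F'} _ _ _.
Arguments witnesses_presentation {S R U V} _ _ _ {P U' V'} _ _.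
Arguments witnesses_S {S R} _ {P w}.
Arguments witnesses_trace {S R} _ {P s p}.

Theorem Sigma11_subspace_separation {S : set Pomega} {A A' : set (set_type S)} :
  Sigma11 S -> Sigma11 A -> Sigma11 A' -> A `&` A' = set0 ->
  exists C, [/\ Borel C, A `<=` C & A' `<=` ~` C].
Proof.
move=> /Sigma11E [R [U [V [UV_open R_Pi02 S_proj]]]].
move=> /Sigma11E [P [U1 [V1 [UV1_open P_Pi02 A_proj]]]].
move=> /Sigma11E [P' [U2 [V2 [UV2_open P'_Pi02 A'_proj]]]] AA'.
have cells w w' : witnesses S R P w -> witnesses S R P' w' ->
    exists j, Borel_separated S (cell j w) (cell j w').
  move=> wit wit'; apply: Borel_separated_cells => ww'.
  have [s sw] := set_val_onto (witnesses_S S_proj wit).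
  have As : A s by apply/A_proj; exists w.1.1; case: wit => _; apply.
  have A's : A' s by apply/A'_proj; exists w'.1.1; case: wit' => _; apply; rewrite sw.
  by rewrite -[False]/(set0 s) -AA'.
have [C [BC PC P'C]] := Lusin_separation prefix_code_succ prefix_code_limit
  (@Borel_separated_bigcup S) (@Borel_separated_sub S)
  (@Borel_separated0l S) (@Borel_separated0r S)
  (witnesses_presentation UV_open R_Pi02 S_proj UV1_open P_Pi02)
  (witnesses_presentation UV_open R_Pi02 S_proj UV2_open P'_Pi02) cells.
exists C; split => // s.
  by move=> /A_proj [p /(witnesses_trace S_proj)]; apply: PC.
by move=> /A'_proj [p /(witnesses_trace S_proj)]; apply: P'C.
Qed.

Lemma Delta11_subspace_Borel {S : set Pomega} {B : set (set_type S)} :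
  Sigma11 S -> Delta11 B -> Borel B.
Proof.
move=> SS [SB PB]; have [C [BC BC' CB]] := Sigma11_subspace_separation SS SB PB (setICr B).
suff -> : B = C by [].
by apply/seteqP; split => // s Cs; apply: boolp.contrapT => /CB.
Qed.

Theorem proposition3p8 (X : topologicalType) :
  CB0_Delta11 X ->
  [set B : set X | Delta11 B] =
    \bigcup_(a in [set: ord]) [set B : set X | Sigma0 a B].
Proof.
move=> [S [[SS _] [f [g [fg _ cf cg]]]]].
apply/seteqP; split => [B DB|B [a _ /Sigma0_Delta11 //]].
have [a Ha] := Borel_preimage cf (Delta11_subspace_Borel SS (Delta11_preimage cg DB)).
exists a => //; suff <- : f @^-1` (g @^-1` B) = B by [].
by apply/seteqP; split => x /=; rewrite fg.
Qed.
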